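(* Let $f^1$ be one of the Gaussian-type smearing functions $f^1_{\rm G}$, $f^1_{{\rm MP},N'}$ (for some $N'\in\mathbb N$) or $f^1_{\rm cs}$ (for some $a\in\mathbb R$). Then $f^1$ extends to an entire function, and there exist $C\ge0$ and $q\ge0$ such that for all $x,y\in\mathbb R$, $$|f^1(x+iy)|\le\begin{cases}C\big(1+(x^2+y^2)^q\big)e^{y^2-x^2}&\text{if }x\ge0,\\ C\big(1+(x^2+y^2)^q\big)\big(1+e^{y^2-x^2}\big)&\text{if }x<0.\end{cases}$$
   Context: $f^1_{\rm G}(x)=\frac12(1-\mathrm{erf}(x))=\frac1{\sqrt\pi}\int_x^\infty e^{-t^2}dt$. Hermite polynomials: $H_0=1$, $H_{n+1}(x)=2xH_n(x)-H_n'(x)$. Methfessel–Paxton: $f^1_{{\rm MP},N'}(x)=f^1_{\rm G}(x)+\sum_{n=1}^{N'}A_nH_{2n-1}(x)e^{-x^2}$ with $A_n=\frac{(-1)^n}{n!4^n\sqrt\pi}$. Cold smearing: $f^1_{\rm cs}(x)=f^1_{\rm G}(x)+\frac1{4\sqrt\pi}(-aH_2(x)+H_1(x))e^{-x^2}$ with a parameter $a\in\mathbb R$. *)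

From Stdlib Require Import Reals Factorial.
From Coquelicot Require Import Coquelicot.
Open Scope R_scope.

(* erf x = 2/sqrt(pi) * int_0^x exp(-t^2) dt, so f_G(x) = (1 - erf x)/2
   = 1/sqrt(pi) * int_x^oo exp(-t^2) dt. *)
Definition erf (x : R) : R :=
  2 / sqrt PI * RInt (fun t => exp (- t ^ 2)) 0 x.

Definition f1_G (x : R) : R := / 2 * (1 - erf x).

Fixpoint hermite (n : nat) : R -> R :=
  match n with
  | O => fun _ => 1
  | S m => fun x => 2 * x * hermite m x - Derive (hermite m) x
  end.

Definition A_MP (n : nat) : R :=
  (-1) ^ n / (INR (Factorial.fact n) * 4 ^ n * sqrt PI).

Definition f1_MP (N' : nat) (x : R) : R :=
  f1_G x + sum_n_m (fun n => A_MP n * hermite (2 * n - 1) x * exp (- x ^ 2)) 1 N'.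

Definition f1_cs (a : R) (x : R) : R :=
  f1_G x + / (4 * sqrt PI) * (- a * hermite 2 x + hermite 1 x) * exp (- x ^ 2).

Inductive smearing : Type :=
  | SmG : smearing
  | SmMP : nat -> smearing
  | SmCS : R -> smearing.

Definition f1 (s : smearing) : R -> R :=
  match s with
  | SmG => f1_G
  | SmMP N' => f1_MP N'
  | SmCS a => f1_cs a
  end.

(* real power t^q for t >= 0, q >= 0, with 0^0 = 1 and 0^q = 0 for q > 0 *)
Definition rpow (t q : R) : R :=
  if Rle_dec t 0 then (if Req_EM_T q 0 then 1 else 0) else Rpower t q.

From Stdlib Require Import Reals Lra Lia List.
From Coquelicot Require Import Coquelicot.
Open Scope R_scope.

(* The Gaussian smearing extends by integrating its derivative along vertical lines,
     f_G(x + iy) = f_G(x) - (i / sqrt pi) * int_0^y exp(-(x + iu)^2) du,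
   so |f_G(x + iy)| <= f_G(x) + 2 |y| exp(y^2 - x^2).  Always 0 <= f_G <= 1, and
   f_G(x) <= exp(-x^2) for x >= 0 thanks to the identity
     (int_0^x exp(-t^2) dt)^2 + int_0^1 exp(-x^2 (1 + t^2)) / (1 + t^2) dt = pi / 4.
   The Methfessel-Paxton and cold smearings are f_G(x) + p(x) exp(-x^2) with p a combination
   of Hermite polynomials, and |p(z) exp(-z^2)| <= C (1 + |z|)^n exp(y^2 - x^2).
   Holomorphy is obtained from the Cauchy-Riemann equations with continuous partial
   derivatives. *)

Lemma exp_le x y : x <= y -> exp x <= exp y.
Proof. intros [H | ->]; [apply Rlt_le, exp_increasing, H | apply Rle_refl]. Qed.

Lemma continuous_of_ex_derive (f : R -> R) (x : R) : ex_derive f x -> continuous f x.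
Proof. apply (ex_derive_continuous (K:=R_AbsRing) (V:=R_NormedModule)). Qed.

Lemma ex_RInt_of_ex_derive (f : R -> R) (a b : R) :
  (forall t, ex_derive f t) -> ex_RInt f a b.
Proof.
  intros Hf. apply (ex_RInt_continuous (V:=R_CompleteNormedModule)).
  intros t _. apply continuous_of_ex_derive, Hf.
Qed.

Lemma is_derive_RInt_0 (f : R -> R) (y : R) :
  (forall t, ex_derive f t) -> is_derive (fun b => RInt f 0 b) y (f y).
Proof.
  intros Hf. apply (is_derive_RInt f (fun b => RInt f 0 b) 0).
  - apply filter_forall. intros b. apply (RInt_correct (V:=R_CompleteNormedModule)).
    apply ex_RInt_of_ex_derive, Hf.
  - apply continuous_of_ex_derive, Hf.
Qed.

Lemma is_derive_zero_const (f : R -> R) (x : R) : (forall t, is_derive f t 0) -> f x = f 0.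
Proof.
  intros Hf. destruct (MVT_gen f 0 x (fun _ => 0)) as [c [_ Hc]]; [intros; apply Hf | | lra].
  intros t _. apply continuity_pt_filterlim, continuous_of_ex_derive. eexists; apply Hf.
Qed.

Lemma is_derive_RInt_param_antiderivative (f g df : R -> R -> R) (x y : R) :
  (forall z u, is_derive (fun t => f t u) z (df z u)) ->
  (forall z u, continuity_2d_pt df z u) ->
  (forall z u, ex_derive (f z) u) ->
  (forall u, is_derive (g x) u (df x u)) ->
  (forall u, ex_derive (df x) u) ->
  is_derive (fun t => RInt (f t) 0 y) x (g x y - g x 0).
Proof.
  intros Hfx Hc Hf Hg Hdf.
  replace (g x y - g x 0) with (RInt (fun u => Derive (fun t => f t u) x) 0 y).
  - apply (is_derive_RInt_param f 0 y x).
    + apply filter_forall. intros z u _. eexists; apply Hfx.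
    + intros u _. apply (continuity_2d_pt_ext df); [|apply Hc].
      intros; symmetry; apply is_derive_unique, Hfx.
    + apply filter_forall. intros z. apply ex_RInt_of_ex_derive, Hf.
  - rewrite (RInt_ext _ (df x)) by (intros; apply is_derive_unique, Hfx).
    apply is_RInt_unique, (is_RInt_derive (g x) (df x)).
    + intros; apply Hg.
    + intros; apply continuous_of_ex_derive, Hdf.
Qed.

Lemma abs_RInt_0_le (f : R -> R) (y M : R) :
  (forall u, ex_derive f u) -> (forall u, Rabs u <= Rabs y -> Rabs (f u) <= M) ->
  Rabs (RInt f 0 y) <= Rabs y * M.
Proof.
  intros Hf HM. destruct (Rle_dec 0 y) as [Hy | Hy].
  - rewrite (Rabs_right y) by lra. replace (y * M) with ((y - 0) * M) by ring.
    apply abs_RInt_le_const; [lra | apply ex_RInt_of_ex_derive, Hf |].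
    intros t Ht. apply HM. rewrite !Rabs_right; lra.
  - rewrite <- (opp_RInt_swap (V:=R_CompleteNormedModule)) by (apply ex_RInt_of_ex_derive, Hf).
    change (Rabs (- RInt f y 0) <= Rabs y * M). rewrite Rabs_Ropp, (Rabs_left y) by lra.
    replace (- y) with (0 - y) by ring.
    apply abs_RInt_le_const; [lra | apply ex_RInt_of_ex_derive, Hf |].
    intros t Ht. apply HM. rewrite (Rabs_left1 t), (Rabs_left y); lra.
Qed.

Lemma continuity_2d_pt_comp_derivable (f : R -> R) (Hf : derivable f) (g : R -> R -> R) x y :
  continuity_2d_pt g x y -> continuity_2d_pt (fun u v => f (g u v)) x y.
Proof. apply continuity_1d_2d_pt_comp, derivable_continuous_pt, Hf. Qed.

Ltac continuity_2d := repeat first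
  [ apply continuity_2d_pt_mult | apply continuity_2d_pt_plus | apply continuity_2d_pt_minus
  | apply continuity_2d_pt_opp | apply continuity_2d_pt_const
  | apply continuity_2d_pt_id1 | apply continuity_2d_pt_id2
  | apply (continuity_2d_pt_comp_derivable exp derivable_exp)
  | apply (continuity_2d_pt_comp_derivable sin derivable_sin)
  | apply (continuity_2d_pt_comp_derivable cos derivable_cos)
  | apply (continuity_2d_pt_comp_derivable (fun t => t ^ _) (derivable_pow _)) ].

(* [auto_derive] leaves [f] applied to arguments that agree only up to [ring]. *)
Ltac unify_args f :=
  repeat match goal with
  | |- context [f ?a] =>
      match goal with
      | |- context [f ?b] =>
          assert_fails (constr_eq a b); replace (f a) with (f b) by (f_equal; ring)
      end
  end.

(** * The Gaussian integral *)

Definition gauss_int (x : R) : R := RInt (fun t => exp (- t ^ 2)) 0 x.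

Definition gauss_aux_integrand (x t : R) : R := exp (- x ^ 2 * (1 + t ^ 2)) / (1 + t ^ 2).

Definition gauss_aux (x : R) : R := RInt (gauss_aux_integrand x) 0 1.

Lemma one_add_sqr_pos t : 0 < 1 + t ^ 2.
Proof. pose proof (pow2_ge_0 t). lra. Qed.

Lemma is_derive_gauss_int x : is_derive gauss_int x (exp (- x ^ 2)).
Proof. apply (is_derive_RInt_0 (fun t => exp (- t ^ 2))). intros t. auto_derive. auto. Qed.

Lemma gauss_int_scale x : RInt (fun t => x * exp (- (x * t) ^ 2)) 0 1 = gauss_int x.
Proof.
  pose proof (RInt_comp_lin (V:=R_CompleteNormedModule) (fun s => exp (- s ^ 2)) x 0 0 1) as H.
  rewrite !Rplus_0_r, Rmult_0_r, Rmult_1_r in H.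
  unfold gauss_int. rewrite <- H by (apply ex_RInt_of_ex_derive; intros; auto_derive; auto).
  apply RInt_ext. intros t _. rewrite Rplus_0_r. reflexivity.
Qed.

Lemma is_derive_gauss_aux_integrand x t :
  is_derive (fun z => gauss_aux_integrand z t) x (-2 * x * exp (- x ^ 2 * (1 + t ^ 2))).
Proof.
  unfold gauss_aux_integrand. pose proof (one_add_sqr_pos t). auto_derive.
  - lra.
  - unify_args exp. field. lra.
Qed.

Lemma is_derive_gauss_aux x : is_derive gauss_aux x (-2 * exp (- x ^ 2) * gauss_int x).
Proof.
  replace (-2 * exp (- x ^ 2) * gauss_int x)
    with (RInt (fun t => Derive (fun z => gauss_aux_integrand z t) x) 0 1).
  - apply (is_derive_RInt_param gauss_aux_integrand 0 1 x).
    + apply filter_forall. intros z t _. eexists. apply is_derive_gauss_aux_integrand.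
    + intros t _. apply (continuity_2d_pt_ext (fun u v => -2 * u * exp (- u ^ 2 * (1 + v ^ 2)))).
      * intros u v. symmetry. apply is_derive_unique, is_derive_gauss_aux_integrand.
      * continuity_2d.
    + apply filter_forall. intros z. apply ex_RInt_of_ex_derive. intros t.
      unfold gauss_aux_integrand. pose proof (one_add_sqr_pos t). auto_derive. lra.
  - rewrite <- gauss_int_scale.
    rewrite <- (RInt_scal (V:=R_CompleteNormedModule))
      by (apply ex_RInt_of_ex_derive; intros; auto_derive; auto).
    apply RInt_ext. intros t _. erewrite is_derive_unique by apply is_derive_gauss_aux_integrand.
    replace (- x ^ 2 * (1 + t ^ 2)) with (- x ^ 2 + - (x * t) ^ 2) by ring.
    rewrite exp_plus. unfold scal; simpl; unfold mult; simpl. ring.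
Qed.

Lemma gauss_aux_0 : gauss_aux 0 = PI / 4.
Proof.
  unfold gauss_aux. rewrite (RInt_ext _ (fun t => / (1 + t ^ 2))).
  2:{ intros t _. unfold gauss_aux_integrand. rewrite pow_i, Ropp_0, Rmult_0_l, exp_0 by lia.
      apply Rmult_1_l. }
  rewrite (is_RInt_unique _ 0 1 (atan 1 - atan 0)), atan_1, atan_0; [lra|].
  apply (is_RInt_derive atan).
  - intros t _. apply is_derive_Reals, derivable_pt_lim_atan.
  - intros t _. apply continuous_of_ex_derive.
    pose proof (one_add_sqr_pos t). auto_derive. lra.
Qed.

Lemma gauss_int_sqr_add_aux x : gauss_int x ^ 2 + gauss_aux x = PI / 4.
Proof.
  rewrite (is_derive_zero_const (fun x => gauss_int x ^ 2 + gauss_aux x) x).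
  - unfold gauss_int. rewrite RInt_point, gauss_aux_0. simpl. unfold zero; simpl. ring.
  - intros t. pose proof (is_derive_gauss_int t) as HI. pose proof (is_derive_gauss_aux t) as HJ.
    auto_derive.
    + repeat split; eexists; eassumption.
    + erewrite !is_derive_unique by eassumption. ring.
Qed.

Lemma gauss_aux_bounds x : 0 <= gauss_aux x <= exp (- x ^ 2).
Proof.
  assert (Hex : ex_RInt (gauss_aux_integrand x) 0 1).
  { apply ex_RInt_of_ex_derive. intros t. unfold gauss_aux_integrand.
    pose proof (one_add_sqr_pos t). auto_derive. lra. }
  assert (Hbound : forall t, 0 <= gauss_aux_integrand x t <= exp (- x ^ 2)).
  { intros t. unfold gauss_aux_integrand. pose proof (one_add_sqr_pos t).
    pose proof (exp_pos (- x ^ 2 * (1 + t ^ 2))).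
    assert (exp (- x ^ 2 * (1 + t ^ 2)) <= exp (- x ^ 2))
      by (apply exp_le; pose proof (pow2_ge_0 x); pose proof (pow2_ge_0 t); nra).
    split; [apply Rdiv_le_0_compat; lra|].
    apply Rmult_le_reg_r with (1 + t ^ 2); [lra|]. unfold Rdiv.
    rewrite Rmult_assoc, Rinv_l by lra. nra. }
  unfold gauss_aux. split.
  - apply RInt_ge_0; [lra | exact Hex | intros; apply Hbound].
  - replace (exp (- x ^ 2)) with (RInt (fun _ => exp (- x ^ 2)) 0 1)
      by (rewrite RInt_const; unfold scal; simpl; unfold mult; simpl; ring).
    apply RInt_le; [lra | exact Hex | apply ex_RInt_const | intros; apply Hbound].
Qed.

Lemma sqrt_PI_pos : 0 < sqrt PI.
Proof. apply sqrt_lt_R0, PI_RGT_0. Qed.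

Lemma f1_G_gauss_int x : f1_G x = (sqrt PI / 2 - gauss_int x) / sqrt PI.
Proof. unfold f1_G, erf. fold (gauss_int x). pose proof sqrt_PI_pos. field. lra. Qed.

Lemma f1_G_bounds x : 0 <= f1_G x <= 1.
Proof.
  rewrite f1_G_gauss_int. pose proof sqrt_PI_pos as Hs.
  pose proof (sqrt_sqrt PI (Rlt_le _ _ PI_RGT_0)) as Hss.
  pose proof (gauss_int_sqr_add_aux x). pose proof (gauss_aux_bounds x).
  pose proof (exp_pos (- x ^ 2)).
  assert (Hi : - (sqrt PI / 2) <= gauss_int x <= sqrt PI / 2) by (split; nra).
  split.
  - apply Rdiv_le_0_compat; lra.
  - apply Rmult_le_reg_r with (sqrt PI); [lra|]. unfold Rdiv.
    rewrite Rmult_assoc, Rinv_l by lra. lra.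
Qed.

Lemma f1_G_le_exp x : 0 <= x -> f1_G x <= exp (- x ^ 2).
Proof.
  intros Hx. rewrite f1_G_gauss_int. pose proof sqrt_PI_pos as Hs.
  pose proof (sqrt_sqrt PI (Rlt_le _ _ PI_RGT_0)) as Hss. pose proof PI2_3_2.
  pose proof (gauss_int_sqr_add_aux x). pose proof (gauss_aux_bounds x).
  assert (Hi : 0 <= gauss_int x).
  { apply RInt_ge_0; [lra | apply ex_RInt_of_ex_derive; intros; auto_derive; auto |].
    intros; apply Rlt_le, exp_pos. }
  set (s := sqrt PI) in *. set (i := gauss_int x) in *.
  assert (Hfac : (s / 2 - i) * (s / 2 + i) <= exp (- x ^ 2)) by nra.
  assert (Hnonneg : 0 <= s / 2 - i) by nra.
  assert (Hhalf : (s / 2 - i) * s <= 2 * exp (- x ^ 2)) by nra.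
  apply Rmult_le_reg_r with s; [lra|]. unfold Rdiv.
  rewrite Rmult_assoc, Rinv_l by lra. pose proof (exp_pos (- x ^ 2)). nra.
Qed.

Lemma is_derive_f1_G x : is_derive f1_G x (- / sqrt PI * exp (- x ^ 2)).
Proof.
  pose proof sqrt_PI_pos. pose proof (is_derive_gauss_int x) as HI.
  apply (is_derive_ext (fun x => / 2 * (1 - 2 / sqrt PI * gauss_int x))); [reflexivity|].
  auto_derive.
  - eexists; exact HI.
  - erewrite is_derive_unique by exact HI. field. lra.
Qed.

Lemma Cmod_le_Rabs_add (a b : R) : Cmod (a, b) <= Rabs a + Rabs b.
Proof.
  replace (a, b) with (RtoC a + (0, b))%C by (unfold RtoC, Cplus; simpl; f_equal; ring).
  eapply Rle_trans; [apply Cmod_triangle|]. rewrite Cmod_R.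
  unfold Cmod; simpl. replace (0 * (0 * 1) + b * (b * 1)) with (Rsqr b) by (unfold Rsqr; ring).
  rewrite sqrt_Rsqr_abs. lra.
Qed.

Lemma differentiable_pt_lim_of_partials (f gx : R -> R -> R) (x y gy : R) :
  (forall u v, is_derive (fun t => f t v) u (gx u v)) ->
  is_derive (fun t => f x t) y gy ->
  continuity_2d_pt gx x y ->
  differentiable_pt_lim f x y (gx x y) gy.
Proof.
  intros Hx Hy Hc. apply filterdiff_differentiable_pt_lim.
  apply (is_derive_filterdiff f x y gx gy).
  - apply filter_forall. intros; apply Hx.
  - exact Hy.
  - apply continuity_2d_pt_filterlim, Hc.
Qed.

(* Cauchy-Riemann: the real differential [[p, -q]; [q, p]] is multiplication by [p + i q]. *)
Lemma is_derive_C_of_differentiable (u v : R -> R -> R) (x y p q : R) :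
  differentiable_pt_lim u x y p (- q) ->
  differentiable_pt_lim v x y q p ->
  is_derive (K:=C_AbsRing) (V:=C_NormedModule)
    (fun w : C => (u (fst w) (snd w), v (fst w) (snd w))) (x, y) (p, q).
Proof.
  intros Hu Hv. split; [apply is_linear_scal_l|].
  intros z Hz.
  apply (is_filter_lim_locally_unique (K:=C_AbsRing) (V:=AbsRing_NormedModule C_AbsRing)) in Hz.
  subst z. intros eps.
  assert (He2 : 0 < eps / 2) by (destruct eps; simpl; lra).
  destruct (Hu (mkposreal _ He2)) as [du Hdu]. destruct (Hv (mkposreal _ He2)) as [dv Hdv].
  exists (mkposreal _ (Rmin_pos _ _ (cond_pos du) (cond_pos dv))).
  intros [x' y'] Hball. simpl in Hdu, Hdv |- *.
  unfold ball in Hball; simpl in Hball.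
  unfold AbsRing_ball, abs, minus, plus, opp in Hball; simpl in Hball.
  unfold norm, minus, scal, plus, opp; simpl.
  unfold Cmult, Cplus, Copp in Hball |- *; simpl in Hball |- *.
  change (x' + - x) with (x' - x) in *. change (y' + - y) with (y' - y) in *.
  pose proof (Rmax_Cmod (x' - x, y' - y)) as Hmax. simpl in Hmax.
  pose proof (Rle_trans _ _ _ (Rmax_l _ _) Hmax). pose proof (Rle_trans _ _ _ (Rmax_r _ _) Hmax).
  pose proof (Rmin_l du dv). pose proof (Rmin_r du dv).
  specialize (Hdu x' y' ltac:(lra) ltac:(lra)). specialize (Hdv x' y' ltac:(lra) ltac:(lra)).
  eapply Rle_trans; [apply Cmod_le_Rabs_add|].
  replace (u x' y' + - u x y + - ((x' - x) * p - (y' - y) * q))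
    with (u x' y' - u x y - (p * (x' - x) + - q * (y' - y))) by ring.
  replace (v x' y' + - v x y + - ((x' - x) * q + (y' - y) * p))
    with (v x' y' - v x y - (q * (x' - x) + p * (y' - y))) by ring.
  pose proof (Rmult_le_compat_l (eps / 2) _ _ (Rlt_le _ _ He2) Hmax).
  change (abs (K:=C_AbsRing) (x' - x, y' - y)) with (Cmod (x' - x, y' - y)). lra.
Qed.

Lemma is_derive_C_of_cauchy_riemann (u v gr gi : R -> R -> R) :
  (forall x y, is_derive (fun t => u t y) x (gr x y)) ->
  (forall x y, is_derive (fun t => v t y) x (gi x y)) ->
  (forall x y, is_derive (fun t => u x t) y (- gi x y)) ->
  (forall x y, is_derive (fun t => v x t) y (gr x y)) ->
  (forall x y, continuity_2d_pt gr x y) ->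
  (forall x y, continuity_2d_pt gi x y) ->
  forall x y,
    is_derive (fun w : C => (u (fst w) (snd w), v (fst w) (snd w)) : C) (x, y) (gr x y, gi x y).
Proof.
  intros Hux Hvx Huy Hvy Hgr Hgi x y.
  apply is_derive_C_of_differentiable; apply differentiable_pt_lim_of_partials; auto.
Qed.

(* Coquelicot gives [C] two normed-module structures: [ex_derive] on [C -> C] uses
   [C_NormedModule], the generic rules such as [is_derive_mult] use
   [AbsRing_NormedModule C_AbsRing]. *)
Lemma is_derive_C_of_AbsRing (f : C -> C) (z l : C) :
  is_derive (K:=C_AbsRing) (V:=AbsRing_NormedModule C_AbsRing) f z l -> is_derive f z l.
Proof.
  intros [[Hadd Hscal [M HM]] Hlim]. split; [split; auto; exists M; exact HM | exact Hlim].
Qed.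

Lemma is_derive_AbsRing_of_C (f : C -> C) (z l : C) :
  is_derive f z l -> is_derive (K:=C_AbsRing) (V:=AbsRing_NormedModule C_AbsRing) f z l.
Proof.
  intros [[Hadd Hscal [M HM]] Hlim]. split; [split; auto; exists M; exact HM | exact Hlim].
Qed.

Lemma ex_derive_Cplus (f g : C -> C) (z : C) :
  ex_derive f z -> ex_derive g z -> ex_derive (fun w => f w + g w)%C z.
Proof. apply (ex_derive_plus (K:=C_AbsRing) (V:=C_NormedModule)). Qed.

Lemma ex_derive_Cmult (f g : C -> C) (z : C) :
  ex_derive f z -> ex_derive g z -> ex_derive (fun w => f w * g w)%C z.
Proof.
  intros [df Hf] [dg Hg]. eexists. apply is_derive_C_of_AbsRing.
  apply (is_derive_mult (K:=C_AbsRing)); try apply is_derive_AbsRing_of_C; eauto using Cmult_comm.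
Qed.

(* A polynomial is its list of coefficients, constant term first. *)
Fixpoint peval (p : list R) (x : R) : R :=
  match p with nil => 0 | a :: p' => a + x * peval p' x end.

Fixpoint pevalC (p : list R) (z : C) : C :=
  match p with nil => 0%C | a :: p' => (RtoC a + z * pevalC p' z)%C end.

Fixpoint padd (p q : list R) : list R :=
  match p, q with
  | nil, _ => q
  | _, nil => p
  | a :: p', b :: q' => (a + b) :: padd p' q'
  end.

Definition pscale (c : R) (p : list R) : list R := map (Rmult c) p.

Fixpoint pderiv (p : list R) : list R :=
  match p with nil => nil | a :: p' => padd p' (0 :: pderiv p') end.

Fixpoint pnorm1 (p : list R) : R :=
  match p with nil => 0 | a :: p' => Rabs a + pnorm1 p' end.

Lemma peval_padd p q x : peval (padd p q) x = peval p x + peval q x.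
Proof.
  revert q; induction p as [|a p IH]; intros [|b q]; simpl; try ring.
  rewrite IH; ring.
Qed.

Lemma peval_pscale c p x : peval (pscale c p) x = c * peval p x.
Proof. induction p as [|a p IH]; simpl; [ring|]. rewrite IH; ring. Qed.

Lemma is_derive_peval p x : is_derive (peval p) x (peval (pderiv p) x).
Proof.
  revert x; induction p as [|a p IH]; intros x; simpl.
  - auto_derive; auto.
  - rewrite peval_padd. simpl. specialize (IH x). auto_derive.
    + eexists; exact IH.
    + erewrite is_derive_unique by exact IH. ring.
Qed.

Lemma pevalC_RtoC p x : pevalC p (RtoC x) = RtoC (peval p x).
Proof.
  induction p as [|a p IH]; simpl; [reflexivity|].
  rewrite IH, <- RtoC_mult, <- RtoC_plus. reflexivity.
Qed.

Lemma ex_derive_pevalC p z : ex_derive (pevalC p) z.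
Proof.
  induction p as [|a p IH]; simpl.
  - apply (ex_derive_const (K:=C_AbsRing) (V:=C_NormedModule)).
  - apply ex_derive_Cplus; [apply (ex_derive_const (K:=C_AbsRing) (V:=C_NormedModule)) |].
    apply ex_derive_Cmult; [| exact IH].
    eexists. apply is_derive_C_of_AbsRing, (is_derive_id (K:=C_AbsRing)).
Qed.

Lemma pnorm1_ge_0 p : 0 <= pnorm1 p.
Proof. induction p as [|a p IH]; simpl; [lra|]. pose proof (Rabs_pos a); lra. Qed.

Lemma Cmod_pevalC_le p z : Cmod (pevalC p z) <= pnorm1 p * (1 + Cmod z) ^ length p.
Proof.
  induction p as [|a p IH]; simpl.
  - rewrite Cmod_0. lra.
  - eapply Rle_trans; [apply Cmod_triangle|]. rewrite Cmod_mult, Cmod_R.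
    pose proof (Cmod_ge_0 z). pose proof (Cmod_ge_0 (pevalC p z)). pose proof (pnorm1_ge_0 p).
    pose proof (Rabs_pos a). pose proof (pow_R1_Rle (1 + Cmod z) (length p) ltac:(lra)).
    set (P := (1 + Cmod z) ^ length p) in *.
    assert (Cmod z * Cmod (pevalC p z) <= Cmod z * (pnorm1 p * P))
      by (apply Rmult_le_compat_l; lra).
    assert (Rabs a <= Rabs a * ((1 + Cmod z) * P))
      by (rewrite <- (Rmult_1_r (Rabs a)) at 1; apply Rmult_le_compat_l; nra).
    nra.
Qed.

Fixpoint hermite_coeffs (n : nat) : list R :=
  match n with
  | O => 1 :: nil
  | S m => padd (pscale 2 (0 :: hermite_coeffs m)) (pscale (-1) (pderiv (hermite_coeffs m)))
  end.

Lemma hermite_peval n x : hermite n x = peval (hermite_coeffs n) x.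
Proof.
  revert x; induction n as [|n IH]; intros x; cbn [hermite hermite_coeffs]; [simpl; ring|].
  rewrite peval_padd, !peval_pscale, (Derive_ext _ _ _ IH).
  erewrite is_derive_unique by apply is_derive_peval. simpl. rewrite IH. ring.
Qed.

Fixpoint mp_coeffs (N : nat) : list R :=
  match N with
  | O => nil
  | S M => padd (mp_coeffs M) (pscale (A_MP (S M)) (hermite_coeffs (2 * S M - 1)))
  end.

Definition smearing_coeffs (s : smearing) : list R :=
  match s with
  | SmG => nil
  | SmMP N => mp_coeffs N
  | SmCS a => pscale (/ (4 * sqrt PI)) (padd (pscale (- a) (hermite_coeffs 2)) (hermite_coeffs 1))
  end.

Lemma f1_MP_peval N x :
  f1_MP N x = f1_G x + peval (mp_coeffs N) x * exp (- x ^ 2).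
Proof.
  unfold f1_MP. f_equal. induction N as [|N IH].
  - rewrite sum_n_m_zero by lia. simpl. unfold zero; simpl. ring.
  - destruct N as [|N].
    + rewrite sum_n_n. cbn [mp_coeffs padd]. rewrite peval_pscale, <- hermite_peval. reflexivity.
    + rewrite sum_n_Sm, IH by lia. change (mp_coeffs (S (S N))) with
        (padd (mp_coeffs (S N)) (pscale (A_MP (S (S N))) (hermite_coeffs (2 * S (S N) - 1)))).
      rewrite peval_padd, peval_pscale, <- hermite_peval. unfold plus; simpl. ring.
Qed.

Lemma f1_peval s x : f1 s x = f1_G x + peval (smearing_coeffs s) x * exp (- x ^ 2).
Proof.
  destruct s as [|N|a].
  - simpl. ring.
  - apply f1_MP_peval.
  - unfold f1, f1_cs, smearing_coeffs.
    rewrite peval_pscale, peval_padd, peval_pscale, <- !hermite_peval. ring.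
Qed.

(* [Cgauss z = exp (- z ^ 2)]; [(gauss_dre, gauss_dim)] is its derivative [-2 z exp (- z ^ 2)]. *)
Definition gauss_re (x y : R) : R := exp (y ^ 2 - x ^ 2) * cos (2 * x * y).

Definition gauss_im (x y : R) : R := - (exp (y ^ 2 - x ^ 2) * sin (2 * x * y)).

Definition Cgauss (z : C) : C := (gauss_re (fst z) (snd z), gauss_im (fst z) (snd z)).

Definition gauss_dre (x y : R) : R := -2 * (x * gauss_re x y - y * gauss_im x y).

Definition gauss_dim (x y : R) : R := -2 * (x * gauss_im x y + y * gauss_re x y).

Ltac solve_gauss_derive :=
  unfold gauss_dre, gauss_dim, gauss_re, gauss_im; auto_derive;
  [trivial | unify_args exp; unify_args sin; unify_args cos; ring].

Lemma is_derive_gauss_re_x x y : is_derive (fun t => gauss_re t y) x (gauss_dre x y).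
Proof. solve_gauss_derive. Qed.

Lemma is_derive_gauss_im_x x y : is_derive (fun t => gauss_im t y) x (gauss_dim x y).
Proof. solve_gauss_derive. Qed.

Lemma is_derive_gauss_re_y x y : is_derive (gauss_re x) y (- gauss_dim x y).
Proof. solve_gauss_derive. Qed.

Lemma is_derive_gauss_im_y x y : is_derive (gauss_im x) y (gauss_dre x y).
Proof. solve_gauss_derive. Qed.

Lemma continuity_2d_pt_gauss_dre x y : continuity_2d_pt gauss_dre x y.
Proof. unfold gauss_dre, gauss_re, gauss_im. continuity_2d. Qed.

Lemma continuity_2d_pt_gauss_dim x y : continuity_2d_pt gauss_dim x y.
Proof. unfold gauss_dim, gauss_re, gauss_im. continuity_2d. Qed.

Lemma ex_derive_Cgauss z : ex_derive Cgauss z.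
Proof.
  destruct z as [x y]. eexists.
  exact (is_derive_C_of_cauchy_riemann _ _ _ _ is_derive_gauss_re_x is_derive_gauss_im_x
           is_derive_gauss_re_y is_derive_gauss_im_y
           continuity_2d_pt_gauss_dre continuity_2d_pt_gauss_dim x y).
Qed.

Lemma Cgauss_RtoC x : Cgauss (RtoC x) = RtoC (exp (- x ^ 2)).
Proof.
  unfold Cgauss, gauss_re, gauss_im, RtoC; simpl.
  rewrite Rmult_0_r, cos_0, sin_0. f_equal; [rewrite Rmult_1_r; f_equal | ]; ring.
Qed.

Lemma Cmod_Cgauss x y : Cmod (Cgauss (x, y)) = exp (y ^ 2 - x ^ 2).
Proof.
  unfold Cgauss, gauss_re, gauss_im, Cmod; cbn [fst snd].
  replace ((exp (y ^ 2 - x ^ 2) * cos (2 * x * y)) ^ 2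
           + (- (exp (y ^ 2 - x ^ 2) * sin (2 * x * y))) ^ 2)
    with (Rsqr (exp (y ^ 2 - x ^ 2)) * (Rsqr (sin (2 * x * y)) + Rsqr (cos (2 * x * y))))
    by (unfold Rsqr; ring).
  rewrite sin2_cos2, Rmult_1_r. apply sqrt_Rsqr, Rlt_le, exp_pos.
Qed.

(** * The entire extension of the Gaussian smearing *)

(* [f1_G (x + i y) = f1_G x + i int_0^y f1_G' (x + i u) du]
   with [f1_G' z = - Cgauss z / sqrt PI]. *)
Definition f1_G_re (x y : R) : R := f1_G x + / sqrt PI * RInt (gauss_im x) 0 y.

Definition f1_G_im (x y : R) : R := - (/ sqrt PI * RInt (gauss_re x) 0 y).

Definition f1_G_C (z : C) : C := (f1_G_re (fst z) (snd z), f1_G_im (fst z) (snd z)).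

Lemma ex_derive_gauss_re x y : ex_derive (gauss_re x) y.
Proof. eexists; apply is_derive_gauss_re_y. Qed.

Lemma ex_derive_gauss_im x y : ex_derive (gauss_im x) y.
Proof. eexists; apply is_derive_gauss_im_y. Qed.

Lemma is_derive_RInt_gauss_re x y :
  is_derive (fun t => RInt (gauss_re t) 0 y) x (gauss_im x y).
Proof.
  replace (gauss_im x y) with (gauss_im x y - gauss_im x 0)
    by (unfold gauss_im; rewrite Rmult_0_r, sin_0; ring).
  apply (is_derive_RInt_param_antiderivative gauss_re gauss_im gauss_dre).
  - apply is_derive_gauss_re_x.
  - apply continuity_2d_pt_gauss_dre.
  - apply ex_derive_gauss_re.
  - apply is_derive_gauss_im_y.
  - intros u. unfold gauss_dre, gauss_re, gauss_im. auto_derive. trivial.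
Qed.

Lemma is_derive_RInt_gauss_im x y :
  is_derive (fun t => RInt (gauss_im t) 0 y) x (exp (- x ^ 2) - gauss_re x y).
Proof.
  replace (exp (- x ^ 2) - gauss_re x y) with (- gauss_re x y - - gauss_re x 0)
    by (unfold gauss_re; rewrite Rmult_0_r, cos_0; unify_args exp; ring).
  apply (is_derive_RInt_param_antiderivative gauss_im (fun x u => - gauss_re x u) gauss_dim).
  - apply is_derive_gauss_im_x.
  - apply continuity_2d_pt_gauss_dim.
  - apply ex_derive_gauss_im.
  - intros u. rewrite <- (Ropp_involutive (gauss_dim x u)).
    apply (is_derive_opp (gauss_re x)), is_derive_gauss_re_y.
  - intros u. unfold gauss_dim, gauss_re, gauss_im. auto_derive. trivial.
Qed.

Lemma ex_derive_f1_G_C z : ex_derive f1_G_C z.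
Proof.
  destruct z as [x y]. eexists.
  apply (is_derive_C_of_cauchy_riemann f1_G_re f1_G_im
           (fun x y => - / sqrt PI * gauss_re x y) (fun x y => - / sqrt PI * gauss_im x y));
    intros x' y'; unfold f1_G_re, f1_G_im.
  - replace (- / sqrt PI * gauss_re x' y')
      with (- / sqrt PI * exp (- x' ^ 2) + / sqrt PI * (exp (- x' ^ 2) - gauss_re x' y')) by ring.
    apply (@is_derive_plus R_AbsRing R_NormedModule f1_G); [apply is_derive_f1_G |].
    apply is_derive_scal, is_derive_RInt_gauss_im.
  - rewrite <- Ropp_mult_distr_l.
    apply (@is_derive_opp R_AbsRing R_NormedModule), is_derive_scal, is_derive_RInt_gauss_re.
  - rewrite <- Ropp_mult_distr_l, Ropp_involutive, <- (Rplus_0_l (_ * _)).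
    apply (@is_derive_plus R_AbsRing R_NormedModule (fun _ => f1_G x')).
    + apply (@is_derive_const R_AbsRing R_NormedModule).
    + apply is_derive_scal, is_derive_RInt_0, ex_derive_gauss_im.
  - rewrite <- Ropp_mult_distr_l.
    apply (@is_derive_opp R_AbsRing R_NormedModule), is_derive_scal.
    apply is_derive_RInt_0, ex_derive_gauss_re.
  - unfold gauss_re. continuity_2d.
  - unfold gauss_im. continuity_2d.
Qed.

Lemma f1_G_C_RtoC x : f1_G_C (RtoC x) = RtoC (f1_G x).
Proof.
  unfold f1_G_C, f1_G_re, f1_G_im, RtoC; simpl. rewrite !RInt_point.
  unfold zero; simpl. f_equal; ring.
Qed.

Lemma Rabs_gauss_re_le x u : Rabs (gauss_re x u) <= exp (u ^ 2 - x ^ 2).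
Proof.
  unfold gauss_re. rewrite Rabs_mult, (Rabs_pos_eq (exp _)) by apply Rlt_le, exp_pos.
  rewrite <- (Rmult_1_r (exp _)) at 2. apply Rmult_le_compat_l; [apply Rlt_le, exp_pos|].
  apply Rabs_le, COS_bound.
Qed.

Lemma Rabs_gauss_im_le x u : Rabs (gauss_im x u) <= exp (u ^ 2 - x ^ 2).
Proof.
  unfold gauss_im. rewrite Rabs_Ropp, Rabs_mult, (Rabs_pos_eq (exp _)) by apply Rlt_le, exp_pos.
  rewrite <- (Rmult_1_r (exp _)) at 2. apply Rmult_le_compat_l; [apply Rlt_le, exp_pos|].
  apply Rabs_le, SIN_bound.
Qed.

Lemma Rabs_RInt_gauss_le (g : R -> R -> R) x y :
  (forall u, ex_derive (g x) u) -> (forall u, Rabs (g x u) <= exp (u ^ 2 - x ^ 2)) ->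
  Rabs (RInt (g x) 0 y) <= Rabs y * exp (y ^ 2 - x ^ 2).
Proof.
  intros Hd Hg. apply abs_RInt_0_le; [exact Hd|].
  intros u Hu. eapply Rle_trans; [apply Hg|]. apply exp_le.
  rewrite <- (pow2_abs u), <- (pow2_abs y). pose proof (Rabs_pos u). nra.
Qed.

Definition gauss_weight (x y : R) : R :=
  if Rle_dec 0 x then exp (y ^ 2 - x ^ 2) else 1 + exp (y ^ 2 - x ^ 2).

Lemma exp_le_gauss_weight x y : exp (y ^ 2 - x ^ 2) <= gauss_weight x y.
Proof. unfold gauss_weight. destruct (Rle_dec 0 x); lra. Qed.

Lemma gauss_weight_ge_0 x y : 0 <= gauss_weight x y.
Proof. eapply Rle_trans; [apply Rlt_le, exp_pos | apply exp_le_gauss_weight]. Qed.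

Lemma f1_G_le_gauss_weight x y : f1_G x <= gauss_weight x y.
Proof.
  unfold gauss_weight. destruct (Rle_dec 0 x) as [Hx | Hx].
  - eapply Rle_trans; [apply f1_G_le_exp, Hx|]. apply exp_le. pose proof (pow2_ge_0 y). lra.
  - pose proof (f1_G_bounds x). pose proof (exp_pos (y ^ 2 - x ^ 2)). lra.
Qed.

Lemma Cmod_f1_G_C_le x y : Cmod (f1_G_C (x, y)) <= (1 + 2 * Rabs y) * gauss_weight x y.
Proof.
  unfold f1_G_C, f1_G_re, f1_G_im; cbn [fst snd].
  eapply Rle_trans; [apply Cmod_le_Rabs_add|].
  pose proof (Rabs_RInt_gauss_le gauss_re x y (ex_derive_gauss_re x) (Rabs_gauss_re_le x)).
  pose proof (Rabs_RInt_gauss_le gauss_im x y (ex_derive_gauss_im x) (Rabs_gauss_im_le x)).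
  pose proof (exp_le_gauss_weight x y). pose proof (f1_G_le_gauss_weight x y).
  pose proof (f1_G_bounds x). pose proof (Rabs_pos y).
  assert (Hinv : 0 < / sqrt PI <= 1).
  { pose proof sqrt_PI_pos. split; [apply Rinv_0_lt_compat; lra|].
    rewrite <- Rinv_1. apply Rinv_le_contravar; [lra|].
    rewrite <- sqrt_1. apply sqrt_le_1_alt. pose proof PI2_3_2. lra. }
  rewrite Rabs_Ropp, Rabs_mult, (Rabs_pos_eq (/ sqrt PI)) by lra.
  pose proof (Rabs_triang (f1_G x) (/ sqrt PI * RInt (gauss_im x) 0 y)).
  rewrite Rabs_mult, (Rabs_pos_eq (/ sqrt PI)), (Rabs_pos_eq (f1_G x)) in * by lra.
  pose proof (Rabs_pos (RInt (gauss_re x) 0 y)). pose proof (Rabs_pos (RInt (gauss_im x) 0 y)).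
  nra.
Qed.

Lemma rpow_sqr_half (r : R) (n : nat) : 0 <= r -> rpow (r ^ 2) (INR n / 2) = r ^ n.
Proof.
  intros Hr. unfold rpow. destruct (Rle_dec (r ^ 2) 0) as [Hle | Hgt].
  - assert (r = 0) as -> by nra.
    destruct (Req_EM_T (INR n / 2) 0) as [Hq | Hq]; destruct n as [|n].
    + reflexivity.
    + exfalso. pose proof (lt_0_INR (S n) ltac:(lia)). lra.
    + exfalso. apply Hq. simpl. lra.
    + simpl. ring.
  - assert (0 < r) by nra.
    unfold Rpower. rewrite ln_pow by lra. simpl INR.
    replace (INR n / 2 * ((1 + 1) * ln r)) with (INR n * ln r) by field.
    apply Rpower_pow. lra.
Qed.

Lemma one_add_pow_le (r : R) (n : nat) : 0 <= r -> (1 + r) ^ n <= 2 ^ n * (1 + r ^ n).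
Proof.
  intros Hr. pose proof (pow_le r n Hr). pose proof (pow_le 2 n ltac:(lra)).
  destruct (Rle_dec r 1).
  - pose proof (pow_incr (1 + r) 2 n ltac:(lra)). nra.
  - pose proof (pow_incr (1 + r) (2 * r) n ltac:(lra)). rewrite Rpow_mult_distr in *. nra.
Qed.

Definition f1_C (s : smearing) (z : C) : C :=
  (f1_G_C z + pevalC (smearing_coeffs s) z * Cgauss z)%C.

Lemma ex_derive_f1_C s z : ex_derive (f1_C s) z.
Proof.
  apply ex_derive_Cplus; [apply ex_derive_f1_G_C|].
  apply ex_derive_Cmult; [apply ex_derive_pevalC | apply ex_derive_Cgauss].
Qed.

Lemma f1_C_RtoC s x : f1_C s (RtoC x) = RtoC (f1 s x).
Proof.
  unfold f1_C. rewrite f1_G_C_RtoC, pevalC_RtoC, Cgauss_RtoC, f1_peval, RtoC_plus, RtoC_mult.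
  reflexivity.
Qed.

Lemma Cmod_f1_C_le s x y :
  Cmod (f1_C s (x, y)) <=
    (2 + pnorm1 (smearing_coeffs s)) * (1 + Cmod (x, y)) ^ S (length (smearing_coeffs s))
    * gauss_weight x y.
Proof.
  pose proof (Cmod_f1_G_C_le x y) as HG.
  pose proof (Cmod_pevalC_le (smearing_coeffs s) (x, y)) as Hp.
  pose proof (Rle_trans _ _ _ (Rmax_r _ _) (Rmax_Cmod (x, y))) as Hy; cbn [snd] in Hy.
  pose proof (Cmod_ge_0 (x, y)) as Hr.
  unfold f1_C. set (p := smearing_coeffs s) in *. set (r := Cmod (x, y)) in *.
  eapply Rle_trans; [apply Cmod_triangle|]. rewrite Cmod_mult, Cmod_Cgauss.
  pose proof (exp_le_gauss_weight x y). pose proof (exp_pos (y ^ 2 - x ^ 2)).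
  pose proof (Cmod_ge_0 (pevalC p (x, y))). pose proof (pnorm1_ge_0 p).
  pose proof (pow_R1_Rle (1 + r) (length p) ltac:(lra)).
  set (P := (1 + r) ^ length p) in *. change ((1 + r) ^ S (length p)) with ((1 + r) * P).
  pose proof (gauss_weight_ge_0 x y).
  assert (Cmod (pevalC p (x, y)) * exp (y ^ 2 - x ^ 2)
          <= pnorm1 p * ((1 + r) * P) * gauss_weight x y)
    by (apply Rmult_le_compat; nra).
  assert ((1 + 2 * Rabs y) * gauss_weight x y <= 2 * ((1 + r) * P) * gauss_weight x y)
    by (apply Rmult_le_compat_r; nra).
  nra.
Qed.

Theorem lemmaA7 (s : smearing) :
  exists F : C -> C,
    (forall z : C, ex_derive F z) /\
    (forall x : R, F (RtoC x) = RtoC (f1 s x)) /\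
    exists c q : R, 0 <= c /\ 0 <= q /\
      forall x y : R,
        Cmod (F (x, y)) <=
          (if Rle_dec 0 x
           then c * (1 + rpow (x ^ 2 + y ^ 2) q) * exp (y ^ 2 - x ^ 2)
           else c * (1 + rpow (x ^ 2 + y ^ 2) q) * (1 + exp (y ^ 2 - x ^ 2))).
Proof.
  pose proof (pnorm1_ge_0 (smearing_coeffs s)).
  set (K := pnorm1 (smearing_coeffs s)) in *. set (m := S (length (smearing_coeffs s))).
  exists (f1_C s). split; [|split].
  - apply ex_derive_f1_C.
  - apply f1_C_RtoC.
  - exists ((2 + K) * 2 ^ m), (INR m / 2).
    pose proof (pow_le 2 m ltac:(lra)).
    split; [apply Rmult_le_pos; lra|]. split; [pose proof (pos_INR m); lra|].
    intros x y.
    assert (Hbound : Cmod (f1_C s (x, y)) <=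
              (2 + K) * 2 ^ m * (1 + rpow (x ^ 2 + y ^ 2) (INR m / 2)) * gauss_weight x y).
    { replace (x ^ 2 + y ^ 2) with (Cmod (x, y) ^ 2) by apply Cmod2_alt.
      rewrite rpow_sqr_half by apply Cmod_ge_0.
      eapply Rle_trans; [apply Cmod_f1_C_le|]. fold K m.
      pose proof (one_add_pow_le (Cmod (x, y)) m (Cmod_ge_0 _)).
      pose proof (gauss_weight_ge_0 x y).
      rewrite !(Rmult_assoc (2 + K)). apply Rmult_le_compat_l; [lra|].
      apply Rmult_le_compat_r; lra. }
    unfold gauss_weight in Hbound. destruct (Rle_dec 0 x); exact Hbound.
Qed.
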